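(* Let $H_1,\dots,H_s$ be graphs with cores $C_1,\dots,C_s$, and suppose there is a homomorphism from $H_j$ to $H_{j+1}$ for every $j=1,\dots,s$ (indices modulo $s$). Then $C_1,\dots,C_s$ are all isomorphic to a common graph $C$, and $H_1,\dots,H_s$ all have the same $C$-covering number.
   Context: A homomorphism $F\to F'$ is a vertex map sending edges to edges. A subgraph $C$ of $H$ is a core of $H$ if there is a homomorphism $H\to C$ but none from $H$ to a proper subgraph of $C$. A copy of $C$ in $F$ is a (not necessarily induced) subgraph of $F$ isomorphic to $C$. For a graph $F$ and a $c$-vertex graph $C$, a $C$-coloring of $F$ is a map $f:V(F)\to\{1,\dots,c\}$ such that the vertices of every copy of $C$ in $F$ receive pairwise distinct colors; $F$ is $C$-colorable if it has one. If $C$ is the core of $H$, a $C$-covering of $H$ of size $r$ is a collection $C_1,\dots,C_r\subseteq V(H)$ such that every copy of $C$ in $H$ lies in the subgraph induced by some $C_i$, and each induced subgraph $H[C_i]$ is $C$-colorable. The $C$-covering number of $H$ is the minimum size of a $C$-covering of $H$. *)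

From mathcomp Require Import all_boot.
Set Implicit Arguments. Unset Strict Implicit. Unset Printing Implicit Defensive.

Record sgraph := SGraph {
  vert :> finType;
  adj : rel vert;
  adj_sym : symmetric adj;
  adj_irr : irreflexive adj }.

Definition hom (F F' : sgraph) (f : F -> F') : Prop :=
  forall x y, adj x y -> adj (f x) (f y).

Record subgraph (G : sgraph) := Subgraph {
  sv : {set G};
  se : rel G;
  se_sub : forall x y, se x y -> [&& adj x y, x \in sv & y \in sv];
  se_sym : symmetric se }.

Definition sub_le (G : sgraph) (D C : subgraph G) : Prop :=
  sv D \subset sv C /\ (forall x y, se D x y -> se C x y).

Definition sub_eq (G : sgraph) (D C : subgraph G) : Prop :=
  sv D = sv C /\ se D =2 se C.

Definition hom_into (G : sgraph) (D : subgraph G) (f : G -> G) : Prop :=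
  (forall x, f x \in sv D) /\ (forall x y, adj x y -> se D (f x) (f y)).

Definition is_core (H : sgraph) (C : subgraph H) : Prop :=
  (exists f, hom_into C f) /\
  ~ (exists D : subgraph H, [/\ sub_le D C, ~ sub_eq D C & exists f, hom_into D f]).

Definition iso_sub (C G : sgraph) (D : subgraph G) : Prop :=
  exists g : C -> G,
    [/\ injective g, sv D = [set g x | x : vert C] & forall x y, adj x y = se D (g x) (g y)].

Definition copy (C F : sgraph) (D : subgraph F) : Prop := iso_sub C D.

Definition C_coloring (C F : sgraph) (f : F -> 'I_#|{: vert C}|) : Prop :=
  forall D : subgraph F, copy C D -> {in sv D &, injective f}.

Definition C_colorable (C F : sgraph) : Prop := exists f : F -> 'I_#|{: vert C}|, C_coloring f.

Definition induced (G : sgraph) (S : {set G}) : sgraph.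
Proof.
refine (@SGraph {x : G | x \in S} (fun x y => adj (val x) (val y)) _ _).
- by move=> x y; rewrite adj_sym.
- by move=> x; rewrite adj_irr.
Defined.

Definition C_covering (C H : sgraph) (r : nat) : Prop :=
  exists cs : seq {set H},
    [/\ size cs = r,
        (forall D : subgraph H, copy C D -> exists2 S, S \in cs & sv D \subset S)
      & (forall S, S \in cs -> C_colorable C (induced S))].

Definition C_covering_number (C H : sgraph) (r : nat) : Prop :=
  C_covering C H r /\ (forall r', C_covering C H r' -> r <= r').

(* Cores are rigid: a homomorphism from a graph into its core restricts to an
   automorphism of the core.  Hence homomorphically equivalent graphs (here,
   any two of the H_j, by composing homomorphisms around the cycle) have
   isomorphic cores C, and every homomorphism from C into H_j is injective.
   Consequently a homomorphism H_i -> H_j maps each copy of C bijectively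
   onto a copy of C, so pulling back a C-covering of H_j along it yields a
   C-covering of H_i of the same size; the covering numbers therefore agree. *)

From Stdlib Require Import Classical.
From mathcomp Require Import all_boot.

Set Implicit Arguments. Unset Strict Implicit. Unset Printing Implicit Defensive.

Definition sub_sgraph (G : sgraph) (C : subgraph G) : sgraph.
Proof.
refine (@SGraph {x : G | x \in sv C} (fun x y => se C (val x) (val y)) _ _).
- by move=> x y; rewrite se_sym.
- by move=> x; apply/negP => /se_sub; rewrite adj_irr.
Defined.

Lemma se_adj (G : sgraph) (C : subgraph G) x y : se C x y -> adj x y.
Proof. by case/se_sub/and3P. Qed.

Lemma hom_comp (F G K : sgraph) (f : F -> G) (g : G -> K) :
  hom f -> hom g -> hom (g \o f).
Proof. by move=> hf hg x y /hf /hg. Qed.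

Lemma hom_into_hom (G : sgraph) (C : subgraph G) (p : G -> G) : hom_into C p -> hom p.
Proof. by case=> _ p_se x y /p_se /se_adj. Qed.

Lemma hom_into_comp (G : sgraph) (C : subgraph G) (p h : G -> G) :
  hom_into C p -> hom h -> hom_into C (p \o h).
Proof. by case=> pC p_se hom_h; split=> [x|x y /hom_h /p_se] /=. Qed.

Section ImageSubgraph.

Variables (F G : sgraph) (f : F -> G).
Hypothesis hom_f : hom f.

Definition image_adj : rel G :=
  fun x y => [exists a, exists b, [&& adj a b, f a == x & f b == y]].

Lemma image_adj_sub x y :
  image_adj x y -> [&& adj x y, x \in [set f a | a : F] & y \in [set f a | a : F]].
Proof.
by case/existsP=> a /existsP[b /and3P[/hom_f hab /eqP<- /eqP<-]]; rewrite hab !imset_f.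
Qed.

Lemma image_adj_sym : symmetric image_adj.
Proof.
suff imp x y : image_adj x y -> image_adj y x by move=> x y; apply/idP/idP; apply: imp.
case/existsP=> a /existsP[b /and3P[hab fa fb]].
by apply/existsP; exists b; apply/existsP; exists a; rewrite adj_sym hab fa fb.
Qed.

Definition image_subgraph : subgraph G := Subgraph image_adj_sub image_adj_sym.

Lemma copy_image_subgraph : injective f -> copy F image_subgraph.
Proof.
move=> inj_f; exists f; split=> // a b /=; apply/idP/existsP=> [hab|].
  by exists a; apply/existsP; exists b; rewrite hab !eqxx.
by case=> a' /existsP[b' /and3P[hab /eqP/inj_f<- /eqP/inj_f<-]].
Qed.

End ImageSubgraph.

Lemma core_rigid (G : sgraph) (C : subgraph G) (phi : G -> G) :
  is_core C -> hom_into C phi ->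
  [/\ {in sv C &, injective phi}, phi @: sv C = sv C &
      {in sv C &, forall a b, se C (phi a) (phi b) -> se C a b}].
Proof.
move=> [_ minC] [phiC phi_se].
(* phi maps G onto the image D of C, a subgraph of C; minimality of C forces D = C. *)
pose r (x : sub_sgraph C) : G := phi (val x).
have hom_r : hom r by move=> x y /se_adj /phi_se /se_adj.
pose D := image_subgraph hom_r.
have svD : sv D = phi @: sv C.
  apply/setP=> y; apply/imsetP/imsetP=> [[x _ ->]|[x xC ->]].
    by exists (val x) => //; apply: valP.
  by exists (exist _ x xC).
have D_le_C : sub_le D C.
  split; first by apply/subsetP=> y; rewrite svD => /imsetP[x _ ->].
  by move=> x y /existsP[a /existsP[b /and3P[/se_adj/phi_se hab /eqP<- /eqP<-]]].
have hom_phi2 : hom_into D (phi \o phi).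
  split=> [x|x y /phi_se hxy]; first by rewrite svD; apply: imset_f.
  apply/existsP; exists (exist _ (phi x) (phiC x)).
  by apply/existsP; exists (exist _ (phi y) (phiC y)); rewrite /= hxy !eqxx.
have [svDC seDC] : sub_eq D C.
  by apply: NNPP => neq; apply: minC; exists D; split=> //; exists (phi \o phi).
have inj_phi : {in sv C &, injective phi} by apply/imset_injP; rewrite -svD svDC.
split=> [//||a b aC bC]; first by rewrite -svD.
rewrite -seDC.
case/existsP=> a' /existsP[b' /and3P[hab /eqP ea /eqP eb]].
by rewrite -(inj_phi _ _ (valP a') aC ea) -(inj_phi _ _ (valP b') bC eb).
Qed.

Lemma core_iso_of_hom_equiv (G G' : sgraph) (C : subgraph G) (C' : subgraph G')
    (f : G -> G') (g : G' -> G) :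
  is_core C -> is_core C' -> hom f -> hom g -> iso_sub (sub_sgraph C) C'.
Proof.
move=> coreC coreC' hom_f hom_g.
have [[p retr_p] _] := coreC; have [[p' retr_p'] _] := coreC'.
have [pC p_se] := retr_p; have [p'C p'_se] := retr_p'.
have hom_p := hom_into_hom retr_p; have hom_p' := hom_into_hom retr_p'.
have [inj_phi _ refl_phi] := core_rigid coreC
  (hom_into_comp retr_p (hom_comp hom_f (hom_comp hom_p' hom_g))).
have [inj_psi _ _] := core_rigid coreC'
  (hom_into_comp retr_p' (hom_comp hom_g (hom_comp hom_p hom_f))).
pose m (x : sub_sgraph C) := p' (f (val x)).
have inj_m : injective m.
  by move=> x y mxy; apply/val_inj/inj_phi; rewrite ?(valP x) ?(valP y) //= -/(m x) mxy.
have inj_pg : {in sv C' &, injective (p \o g)}.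
  by move=> x y xC' yC' /= pgxy; apply: inj_psi => //=; rewrite pgxy.
have card_C'_le_C : #|sv C'| <= #|sv C|.
  rewrite -(card_in_imset inj_pg); apply/subset_leq_card/subsetP=> _ /imsetP[x _ ->].
  exact: pC.
exists m; split=> //.
  apply/eqP; rewrite eq_sym eqEcard; apply/andP; split.
    by apply/subsetP=> _ /imsetP[x _ ->]; apply: p'C.
  by rewrite card_imset // card_sig (@eq_card _ _ (sv C)).
move=> x y /=; apply/idP/idP=> [/se_adj/hom_f/p'_se //|/se_adj/hom_g/p_se gxy].
by apply: refl_phi; rewrite ?(valP x) ?(valP y).
Qed.

Definition homs_injective (C0 G : sgraph) : Prop :=
  forall k : C0 -> G, hom k -> injective k.

Lemma core_homs_injective (C0 G : sgraph) (C : subgraph G) :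
  is_core C -> iso_sub C0 C -> homs_injective C0 G.
Proof.
move=> coreC [h [inj_h svC adj_h]] k hom_k x y kxy.
have [[p retr_p] _] := coreC; have [pC p_se] := retr_p.
pose hinv z := odflt x [pick c | h c == z].
have hinvK z : z \in sv C -> h (hinv z) = z.
  rewrite svC => /imsetP[c _ ->]; rewrite /hinv.
  by case: pickP => [c' /eqP //|/(_ c)]; rewrite eqxx.
have hom_hinvp : hom (hinv \o p).
  by move=> z z' /p_se; rewrite /= adj_h !hinvK.
have [inj_phi _ _] := core_rigid coreC
  (hom_into_comp retr_p (hom_comp hom_hinvp hom_k)).
(* The image of p \o k contains that of phi on sv C, which has #|C0| elements. *)
suff /imset_injP inj_pk : #|[set p (k c) | c : C0]| == #|C0|.
  by apply: inj_pk; rewrite ?inE //= kxy.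
rewrite eqn_leq leq_imset_card /= -[X in X <= _](card_imset _ inj_h) -svC.
rewrite -(card_in_imset inj_phi); apply/subset_leq_card/subsetP=> _ /imsetP[z _ ->].
exact: imset_f.
Qed.

Lemma homs_injective_comp (C0 G G' : sgraph) (t : G -> G') :
  hom t -> homs_injective C0 G' -> homs_injective C0 G.
Proof.
by move=> hom_t injG' k hom_k x y kxy; apply: (injG' _ (hom_comp hom_k hom_t)); rewrite /= kxy.
Qed.

Lemma hom_image_copy (C0 G1 G2 : sgraph) (e : G1 -> G2) (D : subgraph G1) :
  hom e -> homs_injective C0 G2 -> copy C0 D ->
  {in sv D &, injective e} /\ exists2 D' : subgraph G2, copy C0 D' & sv D' = e @: sv D.
Proof.
move=> hom_e injG2 [g [inj_g svD adj_g]].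
have hom_g : hom g by move=> a b; rewrite adj_g => /se_adj.
have inj_eg := injG2 _ (hom_comp hom_g hom_e).
split.
  by move=> _ _ /[!svD] /imsetP[a _ ->] /imsetP[b _ ->] /inj_eg ->.
exists (image_subgraph (hom_comp hom_g hom_e)); first exact: copy_image_subgraph.
by rewrite svD -imset_comp.
Qed.

Definition induced_preimage_map (G1 G2 : sgraph) (e : G1 -> G2) (S : {set G2})
  (x : induced (e @^-1: S)) : induced S.
Proof. by exists (e (val x)); move: (valP x); rewrite inE. Defined.

Lemma induced_preimage_map_hom (G1 G2 : sgraph) (e : G1 -> G2) (S : {set G2}) :
  hom e -> hom (@induced_preimage_map G1 G2 e S).
Proof. by move=> hom_e x y /hom_e. Qed.

Lemma induced_val_hom (G : sgraph) (S : {set G}) : hom (fun x : induced S => val x).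
Proof. by []. Qed.

Lemma C_covering_preimage (C0 G1 G2 : sgraph) (e : G1 -> G2) (r : nat) :
  hom e -> homs_injective C0 G2 -> C_covering C0 G2 r -> C_covering C0 G1 r.
Proof.
move=> hom_e injG2 [cs [size_cs cover_cs col_cs]].
exists [seq e @^-1: V | V : {set G2} <- cs]; split; first by rewrite size_map.
  move=> D /(hom_image_copy hom_e injG2)[_ [D' /cover_cs[V V_cs D'V] svD']].
  exists (e @^-1: V); first exact: map_f.
  by apply/subsetP=> x xD; rewrite inE (subsetP D'V) // svD' imset_f.
move=> _ /mapP[V V_cs ->]; have [col colS] := col_cs V V_cs.
have injS := homs_injective_comp (@induced_val_hom G2 V) injG2.
have hom_eV := @induced_preimage_map_hom _ _ _ V hom_e.
exists (col \o @induced_preimage_map _ _ e V) => D.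
case/(hom_image_copy hom_eV injS)=> inj_D [D' /colS col_D' svD'] x y xD yD cxy.
by apply: inj_D => //; apply: col_D' cxy; rewrite svD' imset_f.
Qed.

Lemma C_covering_exists (C0 G : sgraph) : exists r, C_covering C0 G r.
Proof.
pose cs := enum [set S : {set G} | #|S| == #|C0|].
exists (size cs), cs; split=> // [D [g [inj_g svD _]]|S].
  by exists (sv D); rewrite // mem_enum inE svD card_imset.
rewrite mem_enum inE => /eqP cardS.
have card_induced : #|induced S| = #|{: vert C0}|.
  by rewrite card_sig -cardS; apply: eq_card.
exists (fun x => cast_ord card_induced (enum_rank x)) => D _ x y _ _ /cast_ord_inj.
exact: enum_rank_inj.
Qed.

Lemma ex_minimal_nat (P : nat -> Prop) :
  (exists n, P n) -> exists n, P n /\ forall m, P m -> n <= m.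
Proof.
move=> [n Pn]; apply: NNPP => no_min; elim/ltn_ind: n Pn => n IH Pn.
by apply: no_min; exists n; split=> // m Pm; rewrite leqNgt; apply/negP => /IH; apply.
Qed.

Lemma iter_ordS (s : nat) (i : 'I_s) k : val (iter k (@ordS s) i) = (i + k) %% s.
Proof.
elim: k => [|k IH] /=; first by rewrite addn0 modn_small.
by rewrite IH -addn1 modnDml addn1 addnS.
Qed.

Lemma cyclic_homs_connect (s : nat) (H : 'I_s -> sgraph) :
  (forall j : 'I_s, exists f : H j -> H (ordS j), hom f) ->
  forall i j : 'I_s, exists f : H i -> H j, hom f.
Proof.
move=> hom_step.
have hom_iter k i : exists f : H i -> H (iter k (@ordS s) i), hom f.
  elim: k => [|k [f hom_f]] /=; first by exists id.
  by have [g hom_g] := hom_step (iter k (@ordS s) i); exists (g \o f); apply: hom_comp.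
move=> i j; suff -> : j = iter (j + (s - i)) (@ordS s) i by apply: hom_iter.
apply: val_inj; rewrite iter_ordS addnCA subnKC; last exact: ltnW (ltn_ord i).
by rewrite modnDr modn_small.
Qed.

Definition unit_sgraph : sgraph :=
  @SGraph unit (fun _ _ => false) (fun _ _ => erefl) (fun _ => erefl).

Unset Implicit Arguments.
Theorem lemma14 (s : nat) (H : 'I_s -> sgraph)
  (Cs : forall j : 'I_s, subgraph (H j))
  (hcore : forall j : 'I_s, is_core (Cs j))
  (hhom : forall j : 'I_s, exists f : H j -> H (ordS j), hom f) :
  exists C : sgraph,
    (forall j : 'I_s, iso_sub C (Cs j)) /\
    (exists r : nat, forall j : 'I_s, C_covering_number C (H j) r).
Proof.
have connect := cyclic_homs_connect hhom.
case: s H Cs hcore hhom connect => [|s] H Cs hcore _ connect.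
  by exists unit_sgraph; split; [case | exists 0; case].
pose C := sub_sgraph (Cs ord0).
have iso_C j : iso_sub C (Cs j).
  have [f hom_f] := connect ord0 j; have [g hom_g] := connect j ord0.
  exact: core_iso_of_hom_equiv hom_f hom_g.
have injC j : homs_injective C (H j) := core_homs_injective (hcore j) (iso_C j).
have same_coverings j r : C_covering C (H j) r <-> C_covering C (H ord0) r.
  have [f hom_f] := connect ord0 j; have [g hom_g] := connect j ord0.
  by split; apply: C_covering_preimage; [exact: hom_f | exact: injC | exact: hom_g | exact: injC].
have [r [cov_r min_r]] := ex_minimal_nat (C_covering_exists C (H ord0)).
exists C; split=> //; exists r => j.
by split=> [|r' /same_coverings]; [apply/same_coverings | apply: min_r].
Qed.
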